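(* Let $\Bbbk$ be a field of characteristic $2$, $G=\langle\sigma\rangle$ cyclic of order $4$ acting on $V=V_3$ with $\sigma x_1=x_1+x_2$, $\sigma x_2=x_2+x_3$, $\sigma x_3=x_3$ on the dual basis, and $A=\Bbbk[N^G(x_1),\ x_2(x_2+x_3),\ x_3]$ with $N^G(x_1)=\prod_{i=0}^3\sigma^i(x_1)$. Then $K_3=\ker(\Delta^3:\Bbbk[V]\to\Bbbk[V])$ is a free $A$-module with basis $\{1,\ x_1,\ x_2,\ x_1^2,\ \Delta(x_1^3),\ \Delta(x_1^3x_2)\}$.
   Context: $\Delta=\sigma-\iota\in\Bbbk G$ acting on $\Bbbk[V]=\Bbbk[x_1,x_2,x_3]$. *)

From HB Require Import structures.
From mathcomp Require Import all_boot all_order all_algebra.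
From mathcomp Require Export mpoly.
Set Implicit Arguments. Unset Strict Implicit. Unset Printing Implicit Defensive.
Import GRing.Theory.
Local Open Scope ring_scope.

(* k[V] = k[x1,x2,x3] as {mpoly k[3]}; x_i = 'X_(i-1) *)
Definition o0 : 'I_3 := @Ordinal 3 0 isT.
Definition o1 : 'I_3 := @Ordinal 3 1 isT.
Definition o2 : 'I_3 := @Ordinal 3 2 isT.

Section Defs.
Variable k : fieldType.
Notation P := {mpoly k[3]}.

Definition x1 : P := 'X_o0.
Definition x2 : P := 'X_o1.
Definition x3 : P := 'X_o2.

Definition sigma (f : P) : P := comp_mpoly [tuple x1 + x2; x2 + x3; x3] f.

Definition Delta (f : P) : P := sigma f - f.

Definition normx1 : P := \prod_(i < 4) iter i sigma x1.

Definition inA (f : P) : Prop :=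
  exists Q : P, f = comp_mpoly [tuple normx1; x2 * (x2 + x3); x3] Q.

Definition inK3 (f : P) : Prop := iter 3 Delta f = 0.

Definition basisK3 : 6.-tuple P :=
  [tuple 1; x1; x2; x1 ^+ 2; Delta (x1 ^+ 3); Delta (x1 ^+ 3 * x2)].

End Defs.

From HB Require Import structures.
From mathcomp Require Import all_boot all_order all_algebra.
From mathcomp Require Import mpoly ring.

Set Implicit Arguments.
Unset Strict Implicit.
Unset Printing Implicit Defensive.

Import Order.TTheory GRing.Theory.
Local Open Scope ring_scope.

(* sigma fixes the generators N = N^G(x1), b = x2(x2+x3) and x3 of A, so Delta is A-linear,
   and in characteristic 2 we have Delta^4 = sigma^4 - 1 = 0. For the graded lexicographic
   order with x1 > x2 > x3 the generators have leading monomials x1^4, x2^2, x3; hence they are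
   algebraically independent, and the leading monomial of a nonzero element of A has
   x1-degree divisible by 4 and x2-degree divisible by 2. As x1^4 = N - (b + x3^2) x1^2
   - x3 b x1 and x2^2 = b - x3 x2, this makes k[V] a free A-module with basis x1^i x2^j
   (i < 4, j < 2). Writing f = sum c_(i+4j) x1^i x2^j, the equation Delta^3 f = 0 becomes
   c7 = 0 and b c3 = x3 (c5 + c6 x3), and algebraic independence shows that x3 then
   divides c3 in A, which produces the six basis vectors. *)

Section MPolyIdomain.
Variables (n : nat) (R : idomainType).
Implicit Types (p q : {mpoly R[n]}).

Lemma mlead_sum_distinct (I : eqType) (r : seq I) (F : I -> {mpoly R[n]}) :
  pairwise (fun u v => (F u != 0) ==> (F v != 0) ==> (mlead (F u) != mlead (F v))) r ->
  {in r, forall u, F u = 0} \/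
  \sum_(u <- r) F u != 0 /\
  exists2 u, u \in r & F u != 0 /\ mlead (\sum_(u <- r) F u) = mlead (F u).
Proof.
elim: r => [|a r IH]; first by left.
rewrite pairwise_cons big_cons => /andP[lead_a /IH{IH}].
have [Fa0 [r0|[sum_r [u ur [Fu0 lead_r]]]]|Fa0] := eqVneq (F a) 0.
- by left => u; rewrite in_cons => /predU1P[->|/r0].
- by rewrite Fa0 add0r; right; split=> //; exists u; rewrite // in_cons ur orbT.
case=> [r0|[sum_r [u ur [Fu0 lead_r]]]].
  rewrite big1_seq ?addr0 => [|v /andP[_ /r0]] //.
  by right; split=> //; exists a; rewrite // mem_head.
have lead_neq : mlead (F a) != mlead (\sum_(v <- r) F v).
  by rewrite lead_r; move/allP: lead_a => /(_ u ur); rewrite Fa0 Fu0.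
right; split.
  apply: contraNneq lead_neq => /eqP; rewrite addr_eq0 => /eqP ->.
  by rewrite mleadN.
rewrite mleadD // joinEtotal; case: leP => _.
  by exists u; rewrite // in_cons ur orbT.
by exists a; rewrite // mem_head.
Qed.

Lemma mlead_sum_distinct_eq0 (I : eqType) (r : seq I) (F : I -> {mpoly R[n]}) :
  pairwise (fun u v => (F u != 0) ==> (F v != 0) ==> (mlead (F u) != mlead (F v))) r ->
  \sum_(u <- r) F u = 0 -> {in r, forall u, F u = 0}.
Proof. by move=> /mlead_sum_distinct[//|[/eqP]]. Qed.

Lemma mpolyX_neq0 (i : 'I_n) : 'X_i != 0 :> {mpoly R[n]}.
Proof.
apply/eqP => X0; have := @mleadXm n R U_(i)%MM.
by rewrite X0 mlead0 => /eqP; rewrite eq_sym mnm1_eq0.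
Qed.

Lemma mleadX_neq0 (i : 'I_n) p : mlead p = U_(i)%MM -> p != 0.
Proof.
by move=> lead_p; apply/eqP => p0; move: lead_p; rewrite p0 mlead0 => /eqP; rewrite eq_sym mnm1_eq0.
Qed.

Lemma mleadXD (i : 'I_n) p : (mlead p < U_(i)%MM)%O -> mlead ('X_i + p) = U_(i)%MM.
Proof. by move=> lt_p; rewrite mleadDl mleadXm. Qed.

Lemma mulX_eq_dvd (i j : 'I_n) p q :
  i != j -> 'X_j * p = 'X_i * q -> exists r, p = 'X_i * r.
Proof.
move=> neq_ij eq_pq.
have supp_i m : m \in msupp p -> (0 < m i)%N.
  move=> mp; have : (U_(j) + m)%MM \in msupp (p * 'X_[U_(j)]).
    by rewrite (perm_mem (msuppMX _ _)) mem_map //; apply: addmI.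
  rewrite mulrC eq_pq mulrC (perm_mem (msuppMX _ _)) => /mapP[m' _].
  move=> /(congr1 (fun m : 'X_{1..n} => m i)).
  by rewrite !mnmDE !mnm1E eqxx eq_sym (negbTE neq_ij) add0n => ->.
exists (\sum_(m <- msupp p) p@_m *: 'X_[(m - U_(i))%MM]).
rewrite mulr_sumr [LHS]mpolyE; apply: eq_big_seq => m mp.
rewrite -scalerAr -mpolyXD addmC submK //; apply/mnm_lepP => l.
by rewrite mnm1E; case: eqP => [<-|]; [exact: supp_i|].
Qed.

End MPolyIdomain.
Arguments mpolyX_neq0 {n R} i.

Section Composition.
Variables (n l : nat) (R : idomainType) (lq : n.-tuple {mpoly R[l]}).

Lemma rmorph_comp_mpoly (f : {rmorphism {mpoly R[l]} -> {mpoly R[l]}}) (Q : {mpoly R[n]}) :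
  (forall c, f c%:MP = c%:MP) -> f (Q \mPo lq) = Q \mPo map_tuple f lq.
Proof.
move=> fC; rewrite !comp_mpolyEX rmorph_sum; apply: eq_bigr => m _.
rewrite -!mul_mpolyC rmorphM fC !comp_mpolyX rmorph_prod; congr (_ * _).
by apply: eq_bigr => i _; rewrite rmorphXn tnth_map.
Qed.

Hypothesis lq_neq0 : forall i, tnth lq i != 0.

Lemma comp_mpolyX_neq0 m : 'X_[m] \mPo lq != 0.
Proof. by rewrite comp_mpolyX prodf_seq_neq0; apply/allP => i _; rewrite expf_neq0. Qed.

Lemma mlead_comp_mpolyX m :
  mlead ('X_[m] \mPo lq) = (\sum_(i < n) mlead (tnth lq i) *+ m i)%MM.
Proof.
rewrite comp_mpolyX mlead_prod => [|i _ _]; last by rewrite expf_neq0.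
by apply: eq_bigr => i _; rewrite mleadX.
Qed.

Hypothesis mlead_comp_inj : injective (fun m => mlead ('X_[m] \mPo lq)).

Lemma mlead_comp_mpoly Q : Q != 0 ->
  Q \mPo lq != 0 /\ exists m, mlead (Q \mPo lq) = mlead ('X_[m] \mPo lq).
Proof.
move=> Q0; rewrite comp_mpolyEX.
pose F m := Q@_m *: ('X_[m] \mPo lq).
have F0 m : (F m != 0) = (Q@_m != 0).
  by rewrite /F -mul_mpolyC mulf_eq0 mpolyC_eq0 negb_or comp_mpolyX_neq0 andbT.
have mleadF m : Q@_m != 0 -> mlead (F m) = mlead ('X_[m] \mPo lq).
  exact: mleadZ.
have distinct : pairwise (fun u v =>
    (F u != 0) ==> (F v != 0) ==> (mlead (F u) != mlead (F v))) (msupp Q).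
  move: (msupp_uniq Q); rewrite uniq_pairwise; apply: sub_pairwise => u v neq_uv.
  rewrite !F0; apply/implyP => Qu; apply/implyP => Qv.
  by rewrite !mleadF //; apply: contra neq_uv => /eqP/mlead_comp_inj ->.
case: (mlead_sum_distinct distinct) => [allF0|[sumF0 [u _ [Fu0 ->]]]].
  have [m mQ] : exists m, m \in msupp Q.
    case: (msupp Q) (@msuppnil0 _ _ Q) => [/(_ erefl)/eqP|m s _].
      by rewrite (negbTE Q0).
    by exists m; rewrite mem_head.
  by exfalso; move: mQ (allF0 m mQ); rewrite mcoeff_msupp -F0 => /eqP.
by split=> //; exists u; rewrite mleadF // -F0.
Qed.

Lemma comp_mpoly_inj : injective (comp_mpoly lq).
Proof.
move=> Q1 Q2 eqQ; apply/eqP; rewrite -subr_eq0; apply/negPn/negP => /mlead_comp_mpoly[].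
by rewrite raddfB /= eqQ subrr eqxx.
Qed.

End Composition.

Section Proposition.
Variables (k : fieldType) (hchar : 2%N \in [pchar k]).
Local Notation P := {mpoly k[3]}.
Local Notation x := (x1 k).
Local Notation y := (x2 k).
Local Notation z := (x3 k).
Local Notation b := (x2 k * (x2 k + x3 k)).
Local Notation Nx := (normx1 k).
Local Notation sigma := (@sigma k).
Local Notation Delta := (@Delta k).
Local Notation Delta3 f := (Delta (Delta (Delta f))).
Implicit Types (a c f : P).

HB.instance Definition _ := GRing.RMorphism.copy sigma
  (comp_mpoly [tuple x1 k + x2 k; x2 k + x3 k; x3 k]).

HB.instance Definition _ := GRing.Additive.copy Delta (sigma \- idfun).

(* The witnesses r used below are (p - q) / 2, computed over the integers. *)
Lemma char2_eq (p q r : P) : p = q + r *+ 2 -> p = q.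
Proof.
by move->; rewrite -mulr_natr -(rmorph_nat (@mpolyC 3 k)) (pcharf0 hchar) mulr0 addr0.
Qed.

Lemma sigma_x1 : sigma x = x + y. Proof. exact: comp_mpolyXU. Qed.
Lemma sigma_x2 : sigma y = y + z. Proof. exact: comp_mpolyXU. Qed.
Lemma sigma_x3 : sigma z = z. Proof. exact: comp_mpolyXU. Qed.
Lemma sigmaC (c : k) : sigma c%:MP = c%:MP :> P. Proof. exact: comp_mpolyC. Qed.

Definition sigmaE := (rmorphD, rmorphN, rmorphB, rmorphM, rmorphXn, rmorph1,
  sigma_x1, sigma_x2, sigma_x3).
(* [/=] turns the canonical morphism applications produced by [rmorphD] etc. back into
   [sigma], so that [sigma_x1], [sigma_x2] and [sigma_x3] can fire. *)
Local Ltac push_sigma := rewrite /=; do ?rewrite !sigmaE /=.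

Lemma iter_sigma_comp j (f : P) :
  iter j sigma f = f \mPo [tuple iter j sigma 'X_i | i < 3].
Proof.
elim: j => [|j IH]; first exact/esym/comp_mpoly_id.
rewrite iterS IH rmorph_comp_mpoly; last exact: sigmaC.
by congr (_ \mPo _); apply: eq_from_tnth => i; rewrite tnth_map !tnth_mktuple.
Qed.

Lemma ord3_cases (i : 'I_3) : [\/ i = o0, i = o1 | i = o2].
Proof.
by case: i => [[|[|[|//]]] lt_i3]; [apply: Or31 | apply: Or32 | apply: Or33]; apply: val_inj.
Qed.

Lemma sigma4_X (i : 'I_3) : iter 4 sigma 'X_i = 'X_i :> P.
Proof.
case: (ord3_cases i) => ->.
- change (iter 4 sigma x = x); push_sigma.
  by apply: (@char2_eq _ _ (y *+ 2 + z *+ 3)); ring.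
- change (iter 4 sigma y = y); push_sigma.
  by apply: (@char2_eq _ _ (z *+ 2)); ring.
- by change (iter 4 sigma z = z); push_sigma.
Qed.

Lemma sigma4 (f : P) : iter 4 sigma f = f.
Proof.
rewrite iter_sigma_comp -[RHS]comp_mpoly_id; congr (_ \mPo _).
by apply: eq_from_tnth => i; rewrite !tnth_mktuple sigma4_X.
Qed.

Lemma Delta4 (f : P) : iter 4 Delta f = 0.
Proof.
have := sigma4 f; rewrite /= /Delta !rmorphB /= => ->.
move: (sigma f) (sigma (sigma f)) (sigma (sigma (sigma f))) => s1 s2 s3.
by apply: (@char2_eq _ _ (f - s3 *+ 2 + s2 *+ 3 - s1 *+ 2)); ring.
Qed.

Lemma normx1_prod : Nx = x * (x + y) * (x + z) * (x + y + z).
Proof.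
rewrite /normx1 !big_ord_recr big_ord0 /= mul1r; push_sigma.
apply: (@char2_eq _ _ (2%:R * x^+3 * y + x^+3 * z + 5%:R * x^+2 * y^+2 + 5%:R * x^+2 * y * z
  + x^+2 * z^+2 + 3%:R * x * y^+3 + 4%:R * x * y^+2 * z + x * y * z^+2)).
by ring.
Qed.

Lemma normx1_expand : Nx = x ^+ 4 + (b + z ^+ 2) * x ^+ 2 + z * b * x.
Proof.
rewrite normx1_prod.
by apply: (@char2_eq _ _ (x^+3 * y + x^+3 * z + x^+2 * y * z)); ring.
Qed.

Lemma sigma_normx1 : sigma Nx = Nx.
Proof.
rewrite /normx1 rmorph_prod [LHS]big_ord_recr [RHS]big_ord_recl -iterS sigma4 mulrC.
by congr (_ * _); apply: eq_bigr => i _; rewrite /= lift0.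
Qed.

Lemma sigma_b : sigma b = b.
Proof. by push_sigma; apply: (@char2_eq _ _ (y * z + z ^+ 2)); ring. Qed.

Definition genA : 3.-tuple P := [tuple Nx; b; z].

Lemma sigma_inA a : inA a -> sigma a = a.
Proof.
case=> Q ->; rewrite rmorph_comp_mpoly; last exact: sigmaC.
congr (_ \mPo _); apply: eq_from_tnth => i; rewrite tnth_map.
by case: (ord3_cases i) => ->; rewrite (tnth_nth 0) /= ?sigma_normx1 ?sigma_b ?sigma_x3.
Qed.

Lemma inA_D a c : inA a -> inA c -> inA (a + c).
Proof. by case=> [Q ->] [R ->]; exists (Q + R); rewrite raddfD. Qed.
Lemma inA_N a : inA a -> inA (- a).
Proof. by case=> [Q ->]; exists (- Q); rewrite raddfN. Qed.
Lemma inA_M a c : inA a -> inA c -> inA (a * c).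
Proof. by case=> [Q ->] [R ->]; exists (Q * R); rewrite rmorphM. Qed.
Lemma inA_X a m : inA a -> inA (a ^+ m).
Proof. by case=> [Q ->]; exists (Q ^+ m); rewrite rmorphXn. Qed.
Lemma inA_0 : inA (0 : P).
Proof. by exists 0; rewrite raddf0. Qed.
Lemma inA_1 : inA (1 : P).
Proof. by exists 1; rewrite rmorph1. Qed.
Lemma inA_C (c : k) : inA c%:MP.
Proof. by exists c%:MP; rewrite comp_mpolyC. Qed.
Lemma inA_normx1 : inA Nx.
Proof. by exists 'X_o0; rewrite comp_mpolyXU. Qed.
Lemma inA_b : inA b.
Proof. by exists 'X_o1; rewrite comp_mpolyXU. Qed.
Lemma inA_x3 : inA z.
Proof. by exists 'X_o2; rewrite comp_mpolyXU. Qed.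

Create HintDb inA.
#[local] Hint Resolve inA_D inA_N inA_M inA_X inA_0 inA_1 inA_C inA_normx1 inA_b inA_x3 : inA.

Lemma Delta_mulA a f : inA a -> Delta (a * f) = a * Delta f.
Proof. by move=> Aa; rewrite /Delta rmorphM /= sigma_inA // mulrBr. Qed.

Lemma Delta3_mulA a f : inA a -> Delta3 (a * f) = a * Delta3 f.
Proof. by move=> Aa; rewrite !Delta_mulA. Qed.

Lemma mnm3E (m : 'X_{1..3}) : (m : seq nat) = [:: m o0; m o1; m o2].
Proof. by case: m => [[[|a [|b [|c [|d s]]]] Hs]]. Qed.

Lemma lt_mnm1_21 : (U_(o2)%MM < U_(o1)%MM :> 'X_{1..3})%O.
Proof. by rewrite ltEmnm !mdeg1 2!mnm3E !mnm1E. Qed.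
Lemma lt_mnm1_10 : (U_(o1)%MM < U_(o0)%MM :> 'X_{1..3})%O.
Proof. by rewrite ltEmnm !mdeg1 2!mnm3E !mnm1E. Qed.

Lemma mlead_x2_x3 : mlead (y + z) = U_(o1)%MM.
Proof. by rewrite mleadXD // mleadXm lt_mnm1_21. Qed.

Lemma mlead_normx1 : mlead Nx = (U_(o0) *+ 4)%MM.
Proof.
have lt_yx := lt_mnm1_10; have lt_zx := lt_trans lt_mnm1_21 lt_yx.
have lead_xy : mlead (x + y) = U_(o0)%MM by rewrite mleadXD // mleadXm.
have lead_xz : mlead (x + z) = U_(o0)%MM by rewrite mleadXD // mleadXm.
have lead_xyz : mlead (x + y + z) = U_(o0)%MM.
  by rewrite -addrA mleadXD // mlead_x2_x3.
rewrite normx1_prod !mleadM ?mulf_neq0 ?(mleadX_neq0 lead_xy) ?(mleadX_neq0 lead_xz)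
  ?(mleadX_neq0 lead_xyz) ?mpolyX_neq0 //.
by rewrite mleadXm lead_xy lead_xz lead_xyz !mulmS mulm0n addm0 !addmA.
Qed.

Lemma mlead_b : mlead b = (U_(o1) *+ 2)%MM.
Proof.
rewrite mleadM ?mpolyX_neq0 ?(mleadX_neq0 mlead_x2_x3) //.
by rewrite mleadXm mlead_x2_x3 !mulmS mulm0n addm0.
Qed.

Lemma mlead_genA (i : 'I_3) : mlead (tnth genA i) = (U_(i) *+ (nth 0 [:: 4; 2; 1] i)%N)%MM.
Proof.
case: (ord3_cases i) => ->; rewrite (tnth_nth 0) /= ?mlead_normx1 ?mlead_b //.
by rewrite mleadXm mulmS mulm0n addm0.
Qed.

Lemma genA_neq0 (i : 'I_3) : tnth genA i != 0.
Proof.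
apply/eqP => g0; have /(congr1 (fun m : 'X_{1..3} => m i)) := mlead_genA i.
by rewrite g0 mlead0 mnm0E mulmnE mnm1E eqxx; case: (ord3_cases i) => ->.
Qed.

Lemma mlead_genA_X m (j : 'I_3) :
  mlead ('X_[m] \mPo genA) j = (nth 0 [:: 4; 2; 1] j * m j)%N.
Proof.
rewrite mlead_comp_mpolyX; last exact: genA_neq0.
rewrite mnm_sumE (bigD1 j) //= big1 => [|i neq_ij].
  by rewrite mlead_genA !mulmnE mnm1E eqxx mul1n addn0.
by rewrite mlead_genA !mulmnE mnm1E (negbTE neq_ij).
Qed.

Lemma genA_mlead_inj : injective (fun m => mlead ('X_[m] \mPo genA)).
Proof.
move=> m1 m2 /= eq_lead; apply/mnmP => j.
have /eqP := congr1 (fun m : 'X_{1..3} => m j) eq_lead.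
by rewrite /= !mlead_genA_X eqn_mul2l; case: (ord3_cases j) => -> /eqP.
Qed.

Lemma mlead_inA a : inA a -> a != 0 -> (4 %| mlead a o0)%N && (2 %| mlead a o1)%N.
Proof.
case=> Q -> a0; have Q0 : Q != 0 by apply: contraNneq a0 => ->; rewrite raddf0.
have [_ [m ->]] := mlead_comp_mpoly genA_neq0 genA_mlead_inj Q0.
by rewrite !mlead_genA_X !dvdn_mulr.
Qed.

Lemma inA_dvd_x3 a c : inA a -> inA c -> b * c = z * a -> exists2 d, inA d & c = z * d.
Proof.
case=> Qa -> [Qc ->] eq_ac.
have eqQ : 'X_o1 * Qc = 'X_o2 * Qa.
  apply: (comp_mpoly_inj genA_neq0 genA_mlead_inj).
  by rewrite !rmorphM /= !comp_mpolyXU.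
have [Qd ->] := mulX_eq_dvd (isT : o2 != o1) eqQ.
by exists (Qd \mPo genA); [exists Qd | rewrite rmorphM /= comp_mpolyXU].
Qed.

Definition Aspan n (t : n.-tuple P) f :=
  exists a : 'I_n -> P, (forall i, inA (a i)) /\ f = \sum_(i < n) a i * tnth t i.

Definition Afree n (t : n.-tuple P) :=
  forall a : 'I_n -> P, (forall i, inA (a i)) ->
    \sum_(i < n) a i * tnth t i = 0 -> forall i, a i = 0.

Fixpoint all_inA (s : seq P) : Prop := if s is c :: s' then inA c /\ all_inA s' else True.

Lemma inA_nth (s : seq P) i : all_inA s -> inA (nth 0 s i).
Proof.
elim: s i => [|c s IH] [|i] /=; try by move=> _; exact: inA_0.
  by case.
by case=> _ /IH.
Qed.

Lemma Aspan_nth n (t : n.-tuple P) (s : seq P) f :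
  all_inA s -> f = \sum_(i < n) nth 0 s i * tnth t i -> Aspan t f.
Proof. by move=> As ->; exists (fun i => nth 0 s i); split=> // i; exact: inA_nth. Qed.

Lemma Afree_nth n (t : n.-tuple P) (s : seq P) : Afree t -> all_inA s ->
  \sum_(i < n) nth 0 s i * tnth t i = 0 -> forall j, (j < n)%N -> nth 0 s j = 0.
Proof.
by move=> free_t As sum0 j lt_jn; apply: (free_t _ _ sum0 (Ordinal lt_jn)) => i; exact: inA_nth.
Qed.

Lemma sum_ord_inord n (a g : 'I_n.+1 -> P) :
  \sum_(i < n.+1) a i * g i = \sum_(i < n.+1) a (inord i) * g i.
Proof. by apply: eq_bigr => i _; rewrite inord_val. Qed.

Lemma sum_tnth_iota n (a : nat -> P) (G : P -> P) (t : n.-tuple P) :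
  \sum_(i < n) a i * G (tnth t i) = \sum_(j <- iota 0 n) a j * G (nth 0 t j).
Proof.
have -> : iota 0 n = index_iota 0 n by rewrite /index_iota subn0.
rewrite big_mkord.
by apply: eq_bigr => i _; rewrite (tnth_nth 0).
Qed.

Lemma sum_tnth_iota_inord n (a : 'I_n.+1 -> P) (G : P -> P) (t : n.+1.-tuple P) :
  \sum_(i < n.+1) a i * G (tnth t i) = \sum_(j <- iota 0 n.+1) a (inord j) * G (nth 0 t j).
Proof.
rewrite -(sum_tnth_iota (fun j => a (inord j))).
by apply: eq_bigr => i _; rewrite inord_val.
Qed.

Definition xybasis : 8.-tuple P :=
  [tuple 1; x; x ^+ 2; x ^+ 3; y; x * y; x ^+ 2 * y; x ^+ 3 * y].

Local Ltac expand_sums := rewrite /= !big_cons !big_nil /=.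

Lemma Aspan_one : Aspan xybasis 1.
Proof.
apply: (@Aspan_nth _ _ [:: 1]); first by split; [exact: inA_1|].
by rewrite (sum_tnth_iota _ id); expand_sums; ring.
Qed.

Lemma Aspan_add n (t : n.-tuple P) f g : Aspan t f -> Aspan t g -> Aspan t (f + g).
Proof.
case=> [a [Aa ->]] [c [Ac ->]]; exists (fun i => a i + c i); split=> [i|].
  exact: inA_D.
by rewrite -big_split; apply: eq_bigr => i _; rewrite mulrDl.
Qed.

Lemma Aspan_mulA n (t : n.-tuple P) c f : inA c -> Aspan t f -> Aspan t (c * f).
Proof.
move=> Ac [a [Aa ->]]; exists (fun i => c * a i); split=> [i|]; first exact: inA_M.
by rewrite mulr_sumr; apply: eq_bigr => i _; rewrite mulrA.
Qed.

Lemma Aspan_mulx f : Aspan xybasis f -> Aspan xybasis (x * f).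
Proof.
case=> a [Aa ->]; set c := fun j => a (inord j).
have Ac j : inA (c j) by exact: Aa.
apply: (@Aspan_nth _ _
  [:: c 3%N * Nx; c 0%N - c 3%N * (z * b); c 1%N - c 3%N * (b + z ^+ 2); c 2%N;
      c 7%N * Nx; c 4%N - c 7%N * (z * b); c 5%N - c 7%N * (b + z ^+ 2); c 6%N]).
  by rewrite /=; do !split; auto 8 with inA.
rewrite (sum_tnth_iota_inord _ id) (sum_tnth_iota _ id); expand_sums.
by rewrite /c normx1_expand; ring.
Qed.

Lemma Aspan_muly f : Aspan xybasis f -> Aspan xybasis (y * f).
Proof.
case=> a [Aa ->]; set c := fun j => a (inord j).
have Ac j : inA (c j) by exact: Aa.
apply: (@Aspan_nth _ _
  [:: c 4%N * b; c 5%N * b; c 6%N * b; c 7%N * b;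
      c 0%N - c 4%N * z; c 1%N - c 5%N * z; c 2%N - c 6%N * z; c 3%N - c 7%N * z]).
  by rewrite /=; do !split; auto 8 with inA.
by rewrite (sum_tnth_iota_inord _ id) (sum_tnth_iota _ id); expand_sums; rewrite /c; ring.
Qed.

Lemma mpolyX3 (m : 'X_{1..3}) : 'X_[m] = x ^+ m o0 * y ^+ m o1 * z ^+ m o2.
Proof.
rewrite mpolyXE_id !big_ord_recr big_ord0 /= mul1r.
by congr (_ ^+ _ * _ ^+ _ * _ ^+ _); congr (_ _); apply: val_inj.
Qed.

Lemma Aspan_xybasis f : Aspan xybasis f.
Proof.
have mono i j : Aspan xybasis (x ^+ i * y ^+ j).
  elim: i => [|i IH]; last by rewrite exprS -mulrA; exact: Aspan_mulx.
  rewrite expr0 mul1r; elim: j => [|j IH]; first exact: Aspan_one.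
  by rewrite exprS; exact: Aspan_muly.
rewrite [f]mpolyE; elim/big_ind: _ => [||m _].
- by rewrite -(mul0r 1); apply: Aspan_mulA Aspan_one; exact: inA_0.
- exact: Aspan_add.
rewrite -mul_mpolyC mpolyX3 (mulrC (x ^+ _ * _)) mulrA.
by apply: Aspan_mulA (mono _ _); auto with inA.
Qed.

Definition xy_exps : 8.-tuple (nat * nat) :=
  [tuple (0, 0); (1, 0); (2, 0); (3, 0); (0, 1); (1, 1); (2, 1); (3, 1)]%N.

Lemma tnth_xybasis (i : 'I_8) :
  tnth xybasis i = x ^+ (tnth xy_exps i).1 * y ^+ (tnth xy_exps i).2.
Proof.
by case: i => [[|[|[|[|[|[|[|[|//]]]]]]]] ?]; rewrite (tnth_nth 0) /= ?expr0 ?expr1 ?mulr1 ?mul1r.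
Qed.

Lemma xy_exps_bound (i : 'I_8) : ((tnth xy_exps i).1 < 4)%N && ((tnth xy_exps i).2 < 2)%N.
Proof. by case: i => [[|[|[|[|[|[|[|[|//]]]]]]]] ?]. Qed.

Lemma mlead_inA_xy c i j : inA c -> c != 0 -> (i < 4)%N -> (j < 2)%N ->
  let l := mlead (c * (x ^+ i * y ^+ j)) in (l o0 %% 4, l o1 %% 2)%N = (i, j).
Proof.
move=> Ac c0 lt_i4 lt_j2 /=; have /andP[/eqP dvd0 /eqP dvd1] := mlead_inA Ac c0.
rewrite !mleadM ?mulf_neq0 ?expf_neq0 ?(mpolyX_neq0 o0) ?(mpolyX_neq0 o1) //.
rewrite !mleadX ?(mpolyX_neq0 o0) ?(mpolyX_neq0 o1) // !mleadXm !mnmDE !mulmnE !mnm1E /=.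
rewrite !mul1n !mul0n addn0 add0n -modnDml dvd0 add0n.
by rewrite -[((_ + j) %% 2)%N]modnDml dvd1 add0n !modn_small.
Qed.

Lemma Afree_xybasis : Afree xybasis.
Proof.
move=> a Aa sum0 i; pose F u := a u * tnth xybasis u.
have F0 u : F u != 0 -> a u != 0.
  by apply: contraNneq => au0; rewrite /F au0 mul0r eqxx.
have mlead_F u : F u != 0 -> (mlead (F u) o0 %% 4, mlead (F u) o1 %% 2)%N = tnth xy_exps u.
  move=> /F0 au0; case/andP: (xy_exps_bound u) => lt1 lt2.
  by rewrite /F tnth_xybasis mlead_inA_xy // -surjective_pairing.
have distinct : pairwise (fun u v =>
    (F u != 0) ==> (F v != 0) ==> (mlead (F u) != mlead (F v))) (index_enum 'I_8).
  move: (index_enum_uniq 'I_8); rewrite uniq_pairwise; apply: sub_pairwise => u v neq_uv.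
  apply/implyP => /mlead_F lead_u; apply/implyP => /mlead_F lead_v.
  apply: contra neq_uv => /eqP eq_lead; apply/eqP/(tuple_uniqP xy_exps isT).
  by rewrite -lead_u -lead_v eq_lead.
have /eqP := mlead_sum_distinct_eq0 distinct sum0 (mem_index_enum i).
rewrite /F mulf_eq0 tnth_xybasis mulf_eq0 !expf_eq0.
by rewrite (negbTE (mpolyX_neq0 o0)) (negbTE (mpolyX_neq0 o1)) !andbF !orbF => /eqP.
Qed.

Local Ltac push_Delta := rewrite /Delta; push_sigma.

Lemma Delta3_1 : Delta3 1 = 0.
Proof. by push_Delta; ring. Qed.
Lemma Delta3_x1 : Delta3 x = 0.
Proof. by push_Delta; ring. Qed.
Lemma Delta3_x1e2 : Delta3 (x ^+ 2) = 0.
Proof. by push_Delta; apply: (@char2_eq _ _ (3%:R * y * z + 3%:R * z ^+ 2)); ring. Qed.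
Lemma Delta3_x1e3 : Delta3 (x ^+ 3) = z * b.
Proof.
push_Delta; apply: (@char2_eq _ _ (9%:R * x * y * z + 9%:R * x * z ^+ 2 + 3%:R * y ^+ 3
  + 22%:R * y ^+ 2 * z + 31%:R * y * z ^+ 2 + 12%:R * z ^+ 3)).
by ring.
Qed.
Lemma Delta3_x2 : Delta3 y = 0.
Proof. by push_Delta; ring. Qed.
Lemma Delta3_x1x2 : Delta3 (x * y) = z ^+ 2.
Proof. by push_Delta; apply: (@char2_eq _ _ (z ^+ 2)); ring. Qed.
Lemma Delta3_x1e2x2 : Delta3 (x ^+ 2 * y) = z ^+ 3.
Proof.
push_Delta; apply: (@char2_eq _ _ (3%:R * x * z ^+ 2 + 6%:R * y ^+ 2 * z
  + 18%:R * y * z ^+ 2 + 10%:R * z ^+ 3)).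
by ring.
Qed.
Lemma Delta3_x1e3x2 :
  Delta3 (x ^+ 3 * y) = z ^+ 2 * b + z ^+ 4 + z ^+ 3 * x + z ^+ 2 * x ^+ 2 + z * b * y.
Proof.
push_Delta; apply: (@char2_eq _ _ (4%:R * x ^+ 2 * z ^+ 2 + 18%:R * x * y ^+ 2 * z
  + 54%:R * x * y * z ^+ 2 + 31%:R * x * z ^+ 3 + 3%:R * y ^+ 4 + 40%:R * y ^+ 3 * z
  + 116%:R * y ^+ 2 * z ^+ 2 + 115%:R * y * z ^+ 3 + 37%:R * z ^+ 4)).
by ring.
Qed.

Lemma Delta_x1e3 : Delta (x ^+ 3) = z * b + b * x + (b + z ^+ 2) * y + z * (x * y) + x ^+ 2 * y.
Proof.
push_Delta; apply: (@char2_eq _ _ (x ^+ 2 * y + x * y ^+ 2 - x * y * z - y ^+ 2 * z - y * z ^+ 2)).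
by ring.
Qed.

Lemma Delta_x1e3x2 :
  Delta (x ^+ 3 * y) = b ^+ 2 + b * x ^+ 2 + z * x ^+ 3 + z * b * y + b * (x * y).
Proof.
push_Delta; apply: (@char2_eq _ _ (x ^+ 2 * y ^+ 2 + x ^+ 2 * y * z + x * y ^+ 3
  + x * y ^+ 2 * z - y ^+ 3 * z - y ^+ 2 * z ^+ 2)).
by ring.
Qed.

Lemma Delta3_comb n (t : n.-tuple P) (a : 'I_n -> P) : (forall i, inA (a i)) ->
  Delta3 (\sum_(i < n) a i * tnth t i) = \sum_(i < n) a i * Delta3 (tnth t i).
Proof. by move=> Aa; rewrite !raddf_sum /=; apply: eq_bigr => i _; rewrite Delta3_mulA. Qed.

Definition Delta3_coords (c : nat -> P) : seq P :=
  [:: c 3%N * (z * b) + c 5%N * z ^+ 2 + c 6%N * z ^+ 3 + c 7%N * (z ^+ 2 * b + z ^+ 4);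
      c 7%N * z ^+ 3; c 7%N * z ^+ 2; 0; c 7%N * (z * b)].

Lemma inA_Delta3_coords (c : nat -> P) : (forall j, inA (c j)) -> all_inA (Delta3_coords c).
Proof. by move=> Ac; rewrite /=; do !split; auto 8 with inA. Qed.

Lemma Delta3_xycomb (c : nat -> P) : (forall j, inA (c j)) ->
  Delta3 (\sum_(i < 8) c i * tnth xybasis i) =
  \sum_(i < 8) nth 0 (Delta3_coords c) i * tnth xybasis i.
Proof.
move=> Ac; rewrite Delta3_comb => [|i]; last exact: Ac.
rewrite (sum_tnth_iota _ (fun f => Delta3 f)) (sum_tnth_iota _ id); expand_sums.
rewrite Delta3_1 Delta3_x1 Delta3_x1e2 Delta3_x1e3 Delta3_x2 Delta3_x1x2 Delta3_x1e2x2.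
by rewrite Delta3_x1e3x2; ring.
Qed.

Lemma Delta3_basisK3 i : Delta3 (tnth (basisK3 k) i) = 0.
Proof.
case: i => [[|[|[|[|[|[|//]]]]]] ?]; rewrite (tnth_nth 0) /=.
- exact: Delta3_1.
- exact: Delta3_x1.
- exact: Delta3_x2.
- exact: Delta3_x1e2.
- exact: Delta4.
- exact: Delta4.
Qed.

Lemma Aspan_K3 f : Aspan (basisK3 k) f -> inK3 f.
Proof.
case=> a [Aa ->]; rewrite /inK3 /= Delta3_comb //.
by rewrite big1 // => i _; rewrite Delta3_basisK3 mulr0.
Qed.

Lemma K3_xycomb_Aspan (c : nat -> P) : (forall j, inA (c j)) ->
  Delta3 (\sum_(i < 8) c i * tnth xybasis i) = 0 ->
  Aspan (basisK3 k) (\sum_(i < 8) c i * tnth xybasis i).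
Proof.
move=> Ac; rewrite Delta3_xycomb //.
move=> /(Afree_nth Afree_xybasis (inA_Delta3_coords Ac)) coord0.
have z0 : z != 0 := mpolyX_neq0 o2.
have c7 : c 7%N = 0.
  by have /eqP := coord0 1%N isT; rewrite /= mulf_eq0 expf_eq0 (negbTE z0) orbF => /eqP.
have /eqP : z * (b * c 3%N - z * (c 5%N + c 6%N * z)) = 0.
  rewrite -(coord0 0%N isT) /= c7.
  by apply: (@char2_eq _ _ (- (c 5%N * z ^+ 2 + c 6%N * z ^+ 3))); ring.
rewrite mulf_eq0 (negbTE z0) subr_eq0 /= => /eqP eq3.
have [d Ad c3E] := inA_dvd_x3 (inA_D (Ac 5%N) (inA_M (Ac 6%N) inA_x3)) (Ac 3%N) eq3.
have c5E : c 5%N = c 6%N * z + d * b.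
  move: eq3; rewrite c3E mulrCA => /(mulfI z0) eq5.
  apply: (@char2_eq _ _ (- (c 6%N * z))).
  by rewrite -[c 5%N](addrK (c 6%N * z)) -eq5; ring.
apply: (@Aspan_nth _ _ [:: c 0%N - c 6%N * (z * b) - d * b ^+ 2; c 1%N - c 6%N * b;
                          c 4%N - c 6%N * (b + z ^+ 2) - d * (z * b); c 2%N - d * b; c 6%N; d]).
  by rewrite /=; do !split; auto 8 with inA.
rewrite (sum_tnth_iota _ id) (sum_tnth_iota _ id); expand_sums.
by rewrite Delta_x1e3 Delta_x1e3x2 c3E c5E c7; ring.
Qed.

Lemma K3_Aspan f : inK3 f -> Aspan (basisK3 k) f.
Proof.
have [a [Aa ->]] := Aspan_xybasis f; rewrite /inK3 /= sum_ord_inord.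
by apply: (K3_xycomb_Aspan (c := fun j => a (inord j))) => j; exact: Aa.
Qed.

Definition basisK3_coords (c : nat -> P) : seq P :=
  [:: c 0%N + c 4%N * (z * b) + c 5%N * b ^+ 2; c 1%N + c 4%N * b; c 3%N + c 5%N * b;
      c 5%N * z; c 2%N + c 4%N * (b + z ^+ 2) + c 5%N * (z * b); c 4%N * z + c 5%N * b;
      c 4%N; 0].

Lemma basisK3_xycomb (c : nat -> P) :
  \sum_(i < 6) c i * tnth (basisK3 k) i = \sum_(i < 8) nth 0 (basisK3_coords c) i * tnth xybasis i.
Proof.
rewrite (sum_tnth_iota _ id) (sum_tnth_iota _ id); expand_sums.
by rewrite Delta_x1e3 Delta_x1e3x2; ring.
Qed.

Lemma Afree_basisK3 : Afree (basisK3 k).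
Proof.
move=> a Aa; set c := fun j => a (inord j); have Ac j : inA (c j) by exact: Aa.
have As : all_inA (basisK3_coords c) by rewrite /=; do !split; auto 8 with inA.
rewrite sum_ord_inord (basisK3_xycomb c) => /(Afree_nth Afree_xybasis As) coord0.
have c4 : c 4%N = 0 := coord0 6%N isT.
have c5 : c 5%N = 0.
  by have /eqP := coord0 3%N isT; rewrite /= mulf_eq0 (negbTE (mpolyX_neq0 o2)) orbF => /eqP.
have := coord0 0%N isT; have := coord0 1%N isT; have := coord0 2%N isT; have := coord0 4%N isT.
rewrite /= c4 c5 !mul0r !addr0 => c2 c3 c1 c0 i.
by rewrite -[i]inord_val; case: i => [[|[|[|[|[|[|//]]]]]] ?].
Qed.

End Proposition.

Theorem proposition4p18 (k : fieldType) (hchar : 2%N \in [pchar k]) :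
  (forall i : 'I_6, inK3 (tnth (basisK3 k) i)) /\
  (forall f : {mpoly k[3]},
      inK3 f <->
      exists a : 'I_6 -> {mpoly k[3]},
        (forall i, inA (a i)) /\ f = \sum_(i < 6) a i * tnth (basisK3 k) i) /\
  (forall a : 'I_6 -> {mpoly k[3]},
      (forall i, inA (a i)) ->
      \sum_(i < 6) a i * tnth (basisK3 k) i = 0 ->
      forall i, a i = 0).
Proof.
split; first exact: Delta3_basisK3 hchar.
split; last exact: Afree_basisK3 hchar.
by move=> f; split; [exact: K3_Aspan | exact: Aspan_K3].
Qed.
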